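(* In the Gödel setting described in the context, let $(A,B,R)$ be a $\top$-normalized fuzzy context and $(g,f)\in\mathcal{F}_N$. Then $g^{\uparrow_N}(a)\le g^{\uparrow_\pi}(a)$ for all $a\in A$.
   Context: Gödel setting: all truth-value sets are $[0,1]$ with the usual order, $x\&y=\min\{x,y\}$, and $z\swarrow y=z\nwarrow y$ equals $1$ if $y\le z$ and $z$ otherwise. A fuzzy context is $(A,B,R)$ with nonempty finite sets $A,B$ and $R\colon A\times B\to[0,1]$. For $g\colon B\to[0,1]$, $f\colon A\to[0,1]$: $g^{\uparrow_N}(a)=\inf_{b\in B}(g(b)\swarrow R(a,b))$, $f^{\downarrow^N}(b)=\inf_{a\in A}(f(a)\nwarrow R(a,b))$, $g^{\uparrow_\pi}(a)=\sup_{b\in B}\min\{R(a,b),g(b)\}$. $\mathcal{F}_N=\{(g,f)\mid g^{\uparrow_N}=f,\ f^{\downarrow^N}=g\}$. The context is normalized if no row $R(a,\cdot)$ and no column $R(\cdot,b)$ is identically $0$, and no row and no column has all values different from $0$; it is $\top$-normalized if moreover for every $a\in A$ there is $b_a\in B$ with $R(a,b_a)=1$. *)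

From mathcomp Require Import all_boot all_order all_algebra.
From mathcomp Require Import reals.
Set Implicit Arguments. Unset Strict Implicit. Unset Printing Implicit Defensive.
Import Order.TTheory GRing.Theory Num.Theory.
Local Open Scope ring_scope.

Section Fuzzy.
Variables (R : realType) (A B : finType).

Definition in01 (x : R) : Prop := 0 <= x <= 1.

(* Goedel residuum: z swarrow y = z nwarrow y = 1 if y <= z, z otherwise *)
Definition resid (z y : R) : R := if y <= z then 1 else z.

(* For values in [0,1], inf over a nonempty finite set = iterated min with
   neutral element 1 (top of [0,1]); sup = iterated max with neutral 0. *)
Definition upN (Rel : A -> B -> R) (g : B -> R) (a : A) : R :=
  \big[Num.min/1]_(b : B) resid (g b) (Rel a b).
Definition downN (Rel : A -> B -> R) (f : A -> R) (b : B) : R :=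
  \big[Num.min/1]_(a : A) resid (f a) (Rel a b).
Definition upPi (Rel : A -> B -> R) (g : B -> R) (a : A) : R :=
  \big[Num.max/0]_(b : B) Num.min (Rel a b) (g b).

Definition fuzzy_context (Rel : A -> B -> R) : Prop :=
  (0 < #|A|)%N /\ (0 < #|B|)%N /\ forall a b, in01 (Rel a b).

Definition normalized (Rel : A -> B -> R) : Prop :=
  (forall a, exists b, Rel a b != 0) /\ (forall b, exists a, Rel a b != 0) /\
  (forall a, exists b, Rel a b = 0) /\ (forall b, exists a, Rel a b = 0).

Definition top_normalized (Rel : A -> B -> R) : Prop :=
  normalized Rel /\ forall a, exists b, Rel a b = 1.

Definition in_FN (Rel : A -> B -> R) (g : B -> R) (f : A -> R) : Prop :=
  (forall b, in01 (g b)) /\ (forall a, in01 (f a)) /\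
  upN Rel g = f /\ downN Rel f = g.

End Fuzzy.

From mathcomp Require Import all_boot all_order all_algebra.
From mathcomp Require Import reals.
Import Order.TTheory GRing.Theory Num.Theory.
Local Open Scope ring_scope.

(* Pick [b] with [R(a, b) = 1]. Since the residuum [resid (g b) 1] is [g b]
   when [g b <= 1], the infimum defining [g^{up_N}(a)] is at most [g b = min (R(a, b), g b)], which
   is one of the terms of the supremum defining [g^{up_pi}(a)]. *)

Section GoedelDerivation.
Context {R : realType} {A B : finType} (Rel : A -> B -> R).

Lemma resid1 (z : R) : z <= 1 -> resid z 1 = z.
Proof.
move=> z_le1; rewrite /resid; case: ifP => // one_le_z.
by apply/eqP; rewrite eq_le z_le1 one_le_z.
Qed.

Lemma upN_le_resid (g : B -> R) a b : upN Rel g a <= resid (g b) (Rel a b).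
Proof. exact: bigmin_le. Qed.

Lemma min_le_upPi (g : B -> R) a b : Num.min (Rel a b) (g b) <= upPi Rel g a.
Proof. exact: le_bigmax. Qed.

End GoedelDerivation.

Theorem mainTheorem12 (R : realType) (A B : finType) (Rel : A -> B -> R)
  (g : B -> R) (f : A -> R) :
  fuzzy_context Rel -> top_normalized Rel -> in_FN Rel g f ->
  forall a : A, upN Rel g a <= upPi Rel g a.
Proof.
move=> _ [_ top] [g01 _] a.
have [b Rab1] := top a.
have /andP[_ gb_le1] := g01 b.
apply: le_trans (upN_le_resid Rel g a b) (le_trans _ (min_le_upPi Rel g a b)).
by rewrite Rab1 resid1 // min_r.
Qed.
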